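(* Let $\mathcal{R}=(\mathcal{X},(\mathcal{M},\mathcal{I}))$ be a reflexive graph category with isomorphisms that has products stable under face maps and degeneracies. Then for each natural number $n$, the category $\mathcal{M}^n\to\mathcal{M}$ has (binary) products.
   Context: Fix a locally small category $\mathcal{C}$ with finite products; all categories, functors and natural transformations below are internal to $\mathcal{C}$ (objects of objects $C_0$, of morphisms $C_1$, source/target $\mathsf{s}_C,\mathsf{t}_C$, identities $\mathsf{id}_C$, composition $\circ_C$ on generalized morphisms $J\to C_1$, object/morphism parts $F_0,F_1$ of functors). A reflexive graph category $\mathcal{X}$ consists of internal categories $\mathcal{X}(0),\mathcal{X}(1)$, two distinct internal functors $\mathcal{X}(\mathbf{f}_\top),\mathcal{X}(\mathbf{f}_\bot):\mathcal{X}(1)\to\mathcal{X}(0)$ (face maps) and an internal functor $\mathcal{X}(\mathbf{d}):\mathcal{X}(0)\to\mathcal{X}(1)$ (degeneracy) with $\mathcal{X}(\mathbf{f}_\star)\circ\mathcal{X}(\mathbf{d})=\mathsf{id}$; $\mathcal{X}^n$ is the componentwise product. A reflexive graph functor $\mathcal{F}:\mathcal{X}\to\mathcal{Y}$ is a pair of internal functors $\mathcal{F}(l):\mathcal{X}(l)\to\mathcal{Y}(l)$; face map-preserving: $\mathcal{Y}(\mathbf{f}_\star)\circ\mathcal{F}(1)=\mathcal{F}(0)\circ\mathcal{X}(\mathbf{f}_\star)$; degeneracy-preserving: equipped with an internal natural isomorphism $\varepsilon_\mathcal{F}:\mathcal{Y}(\mathbf{d})\circ\mathcal{F}(0)\to\mathcal{F}(1)\circ\mathcal{X}(\mathbf{d})$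 with $\mathcal{Y}(\mathbf{f}_\star)_1\circ\varepsilon_\mathcal{F}=\mathsf{id}_{\mathcal{Y}(0)}\circ\mathcal{F}(0)_0$. Reflexive graph natural transformations $\eta:\mathcal{F}\to\mathcal{G}$: pairs of internal natural transformations $\eta(l):\mathcal{F}(l)\to\mathcal{G}(l)$; face map-preserving: $\mathcal{Y}(\mathbf{f}_\star)_1\circ\eta(1)=\eta(0)\circ\mathcal{X}(\mathbf{f}_\star)_0$; degeneracy-preserving: $(\eta(1)\circ\mathcal{X}(\mathbf{d})_0)\circ_{\mathcal{Y}(1)}\varepsilon_\mathcal{F}=\varepsilon_\mathcal{G}\circ_{\mathcal{Y}(1)}(\mathcal{Y}(\mathbf{d})_1\circ\eta(0))$. Composition $(\mathcal{G}\circ\mathcal{F})(l)=\mathcal{G}(l)\circ\mathcal{F}(l)$, $\varepsilon_{\mathcal{G}\circ\mathcal{F}}=(\mathcal{G}(1)_1\circ\varepsilon_\mathcal{F})\circ(\varepsilon_\mathcal{G}\circ\mathcal{F}(0)_0)$. A reflexive graph category with isomorphisms $\mathcal{R}=(\mathcal{X},(\mathcal{M},\mathcal{I}))$: reflexive graph categories $\mathcal{X},\mathcal{M}$ and a reflexive graph functor $\mathcal{I}:\mathcal{M}\to\mathcal{X}$ with $\mathcal{I}(l)_0$ iso, $\mathcal{I}(l)_1$ monic, $\mathcal{I}(0)\circ\mathcal{M}(\mathbf{f}_\star)=\mathcal{X}(\mathbf{f}_\star)\circ\mathcal{I}(1)$, $\mathcal{I}(1)\circ\mathcal{M}(\mathbf{d})=\mathcal{X}(\mathbf{d})\circ\mathcal{I}(0)$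 (so $\varepsilon_\mathcal{I}$ is an identity), and every morphism of $\mathcal{M}(l)$ an isomorphism; $\mathcal{M}(l)$ is regarded as a wide subcategory of $\mathcal{X}(l)$, and a morphism of $\mathcal{X}(l)$ ''lies in $\mathcal{M}(l)$'' if it is in the image of $\mathcal{I}(l)_1$. The category $\mathcal{M}^n\to\mathcal{M}$ has as objects the face map- and degeneracy-preserving reflexive graph functors $\mathcal{M}^n\to\mathcal{M}$ and as morphisms $\mathcal{F}\to\mathcal{G}$ the face map- and degeneracy-preserving reflexive graph natural transformations $\mathcal{I}\circ\mathcal{F}\to\mathcal{I}\circ\mathcal{G}$, with componentwise identities and composition. An internal category $C$ has products if it is equipped with $\times_C:C_0\times C_0\to C_0$ and projections $\mathsf{fst}_C,\mathsf{snd}_C:C_0\times C_0\to C_1$ (from $a\times_C b$ to $a$, resp. $b$) satisfying the usual universal property for all generalized objects and morphisms; this induces $f\times_C g$ on morphisms. $\mathcal{R}$ has products stable under face maps and degeneracies if: $\mathcal{X}(0)$ and $\mathcal{X}(1)$ have products; for $f,g:J\to\mathcal{X}(l)_1$ lying in $\mathcal{M}(l)$, $f\times_{\mathcal{X}(l)}g$ lies in $\mathcal{M}(l)$; for both $\star$, $\mathcal{X}(\mathbf{f}_\star)_0\circ\times_{\mathcal{X}(1)}=\times_{\mathcal{X}(0)}\circ(\mathcal{X}(\mathbf{f}_\star)_0\times\mathcal{X}(\mathbf{f}_\star)_0)$ with the canonical comparison morphism being the identity; and the canonical comparison morphism $\eta^\times_\mathcal{X}[a,b]:\mathcal{X}(\mathbf{d})_0(a\times_{\mathcal{X}(0)}b)\to\mathcal{X}(\mathbf{d})_0(a)\times_{\mathcal{X}(1)}\mathcal{X}(\mathbf{d})_0(b)$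 (induced by $\mathcal{X}(\mathbf{d})_1$ applied to the projections) is an isomorphism lying in $\mathcal{M}(1)$. *)

Set Implicit Arguments.
Unset Strict Implicit.

Record Category := {
  ob :> Type;
  hom : ob -> ob -> Type;
  idc : forall a, hom a a;
  compc : forall a b c, hom b c -> hom a b -> hom a c;
  compA : forall a b c d (h : hom c d) (g : hom b c) (f : hom a b),
      compc h (compc g f) = compc (compc h g) f;
  comp1l : forall a b (f : hom a b), compc (idc b) f = f;
  comp1r : forall a b (f : hom a b), compc f (idc a) = f;
  one : ob;
  bang : forall a, hom a one;
  bang_uniq : forall a (f : hom a one), f = bang a;
  prod : ob -> ob -> ob;
  pi1 : forall a b, hom (prod a b) a;
  pi2 : forall a b, hom (prod a b) b;
  pair : forall c a b, hom c a -> hom c b -> hom c (prod a b);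
  pair_pi1 : forall c a b (f : hom c a) (g : hom c b), compc (pi1 a b) (pair f g) = f;
  pair_pi2 : forall c a b (f : hom c a) (g : hom c b), compc (pi2 a b) (pair f g) = g;
  pair_uniq : forall c a b (h : hom c (prod a b)),
      h = pair (compc (pi1 a b) h) (compc (pi2 a b) h)
}.

Arguments hom {C} a b : rename.
Arguments idc {C} a : rename.
Arguments compc {C a b c} g f : rename.
Arguments one {C} : rename.
Arguments bang {C} a : rename.
Arguments prod {C} a b : rename.
Arguments pi1 {C a b} : rename.
Arguments pi2 {C a b} : rename.
Arguments pair {C c a b} f g : rename.

Notation "g ⊙ f" := (compc g f) (at level 40, left associativity).

Section Internal.
Variable C : Category.

Definition prodmap (a b c d : C) (f : hom a c) (g : hom b d) : hom (prod a b) (prod c d) :=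
  pair (f ⊙ pi1) (g ⊙ pi2).

Definition iso_C (a b : C) (f : hom a b) : Prop :=
  exists g : hom b a, g ⊙ f = idc a /\ f ⊙ g = idc b.

Definition monic_C (a b : C) (f : hom a b) : Prop :=
  forall z (u v : hom z a), f ⊙ u = f ⊙ v -> u = v.

(* Internal categories (data + axioms).  Composition is given on       *)
(* generalized morphisms J -> C_1: [icmp D f g] is "f o g", meaningful  *)
(* when f and g are composable (src f = tgt g).                         *)
Record icat := {
  c0 : C; c1 : C;
  src : hom c1 c0; tgt : hom c1 c0;
  ida : hom c0 c1;
  icmp : forall J : C, hom J c1 -> hom J c1 -> hom J c1
}.

Arguments c0 i : rename.
Arguments c1 i : rename.
Arguments src i : rename.
Arguments tgt i : rename.
Arguments ida i : rename.
Arguments icmp i {J} _ _ : rename.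

Definition composable (D : icat) (J : C) (f g : hom J (c1 D)) : Prop :=
  src D ⊙ f = tgt D ⊙ g.

Definition is_icat (D : icat) : Prop :=
  src D ⊙ ida D = idc (c0 D) /\ tgt D ⊙ ida D = idc (c0 D) /\
  (forall J (f g : hom J (c1 D)), composable f g ->
      src D ⊙ icmp D f g = src D ⊙ g /\ tgt D ⊙ icmp D f g = tgt D ⊙ f) /\
  (forall J K (h : hom K J) (f g : hom J (c1 D)), composable f g ->
      icmp D f g ⊙ h = icmp D (f ⊙ h) (g ⊙ h)) /\
  (forall J (f : hom J (c1 D)), icmp D (ida D ⊙ (tgt D ⊙ f)) f = f) /\
  (forall J (f : hom J (c1 D)), icmp D f (ida D ⊙ (src D ⊙ f)) = f) /\
  (forall J (f g h : hom J (c1 D)), composable f g -> composable g h ->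
      icmp D f (icmp D g h) = icmp D (icmp D f g) h).

Definition is_iiso (D : icat) (J : C) (f : hom J (c1 D)) : Prop :=
  exists g : hom J (c1 D),
    src D ⊙ g = tgt D ⊙ f /\ tgt D ⊙ g = src D ⊙ f /\
    icmp D g f = ida D ⊙ (src D ⊙ f) /\ icmp D f g = ida D ⊙ (tgt D ⊙ f).

Record ifun (D E : icat) := { fobj : hom (c0 D) (c0 E); fmor : hom (c1 D) (c1 E) }.

Definition is_ifun (D E : icat) (F : ifun D E) : Prop :=
  src E ⊙ fmor F = fobj F ⊙ src D /\ tgt E ⊙ fmor F = fobj F ⊙ tgt D /\
  fmor F ⊙ ida D = ida E ⊙ fobj F /\
  (forall J (f g : hom J (c1 D)), composable f g ->
      fmor F ⊙ icmp D f g = icmp E (fmor F ⊙ f) (fmor F ⊙ g)).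

Definition ifun_id (D : icat) : ifun D D := {| fobj := idc (c0 D); fmor := idc (c1 D) |}.

Definition ifun_comp (D E F : icat) (G : ifun E F) (H : ifun D E) : ifun D F :=
  {| fobj := fobj G ⊙ fobj H; fmor := fmor G ⊙ fmor H |}.

Definition ifun_eq (D E : icat) (F G : ifun D E) : Prop :=
  fobj F = fobj G /\ fmor F = fmor G.

Definition is_inat (D E : icat) (F G : ifun D E) (eta : hom (c0 D) (c1 E)) : Prop :=
  src E ⊙ eta = fobj F /\ tgt E ⊙ eta = fobj G /\
  (forall J (f : hom J (c1 D)),
      icmp E (eta ⊙ (tgt D ⊙ f)) (fmor F ⊙ f) = icmp E (fmor G ⊙ f) (eta ⊙ (src D ⊙ f))).

Definition is_inat_iso (D E : icat) (F G : ifun D E) (eta : hom (c0 D) (c1 E)) : Prop :=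
  is_inat F G eta /\
  exists eta' : hom (c0 D) (c1 E), is_inat G F eta' /\
    icmp E eta' eta = ida E ⊙ fobj F /\ icmp E eta eta' = ida E ⊙ fobj G.

Record iprod_data (D : icat) := {
  ipr : hom (prod (c0 D) (c0 D)) (c0 D);
  ifst : hom (prod (c0 D) (c0 D)) (c1 D);
  isnd : hom (prod (c0 D) (c0 D)) (c1 D)
}.

Definition is_iprod (D : icat) (P : iprod_data D) : Prop :=
  src D ⊙ ifst P = ipr P /\ tgt D ⊙ ifst P = pi1 /\
  src D ⊙ isnd P = ipr P /\ tgt D ⊙ isnd P = pi2 /\
  (forall J (a b c : hom J (c0 D)) (f g : hom J (c1 D)),
      src D ⊙ f = c -> tgt D ⊙ f = a -> src D ⊙ g = c -> tgt D ⊙ g = b ->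
      exists! h : hom J (c1 D),
        src D ⊙ h = c /\ tgt D ⊙ h = ipr P ⊙ pair a b /\
        icmp D (ifst P ⊙ pair a b) h = f /\ icmp D (isnd P ⊙ pair a b) h = g).

(* [iprod_mor P f g h] : h is the induced morphism f x g. *)
Definition iprod_mor (D : icat) (P : iprod_data D) (J : C) (f g h : hom J (c1 D)) : Prop :=
  src D ⊙ h = ipr P ⊙ pair (src D ⊙ f) (src D ⊙ g) /\
  tgt D ⊙ h = ipr P ⊙ pair (tgt D ⊙ f) (tgt D ⊙ g) /\
  icmp D (ifst P ⊙ pair (tgt D ⊙ f) (tgt D ⊙ g)) h
    = icmp D f (ifst P ⊙ pair (src D ⊙ f) (src D ⊙ g)) /\
  icmp D (isnd P ⊙ pair (tgt D ⊙ f) (tgt D ⊙ g)) h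
    = icmp D g (isnd P ⊙ pair (src D ⊙ f) (src D ⊙ g)).

(* Reflexive graph categories.  Face maps indexed by bool:              *)
(* face true = f_top, face false = f_bot.                               *)
Record rgcat := {
  r0 : icat; r1 : icat;
  face : bool -> ifun r1 r0;
  degen : ifun r0 r1
}.

Arguments r0 r : rename.
Arguments r1 r : rename.
Arguments face r s : rename.
Arguments degen r : rename.

Definition is_rgcat (X : rgcat) : Prop :=
  is_icat (r0 X) /\ is_icat (r1 X) /\
  (forall s, is_ifun (face X s)) /\ is_ifun (degen X) /\
  ~ ifun_eq (face X true) (face X false) /\
  (forall s, ifun_eq (ifun_comp (face X s) (degen X)) (ifun_id (r0 X))).

(* Reflexive graph functors, with the degeneracy comparison eps. *)
Record rgfun (X Y : rgcat) := {
  F0 : ifun (r0 X) (r0 Y);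
  F1 : ifun (r1 X) (r1 Y);
  eps : hom (c0 (r0 X)) (c1 (r1 Y))
}.

Definition is_rgfun (X Y : rgcat) (F : rgfun X Y) : Prop :=
  is_ifun (F0 F) /\ is_ifun (F1 F).

Definition face_preserving (X Y : rgcat) (F : rgfun X Y) : Prop :=
  forall s, ifun_eq (ifun_comp (face Y s) (F1 F)) (ifun_comp (F0 F) (face X s)).

Definition degen_preserving (X Y : rgcat) (F : rgfun X Y) : Prop :=
  is_inat_iso (ifun_comp (degen Y) (F0 F)) (ifun_comp (F1 F) (degen X)) (eps F) /\
  (forall s, fmor (face Y s) ⊙ eps F = ida (r0 Y) ⊙ fobj (F0 F)).

Definition rgfun_comp (X Y Z : rgcat) (G : rgfun Y Z) (F : rgfun X Y) : rgfun X Z :=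
  {| F0 := ifun_comp (F0 G) (F0 F);
     F1 := ifun_comp (F1 G) (F1 F);
     eps := icmp (r1 Z) (fmor (F1 G) ⊙ eps F) (eps G ⊙ fobj (F0 F)) |}.

Record rgnat (X Y : rgcat) := {
  eta0 : hom (c0 (r0 X)) (c1 (r0 Y));
  eta1 : hom (c0 (r1 X)) (c1 (r1 Y))
}.

Definition is_rgnat (X Y : rgcat) (F G : rgfun X Y) (e : rgnat X Y) : Prop :=
  is_inat (F0 F) (F0 G) (eta0 e) /\ is_inat (F1 F) (F1 G) (eta1 e).

Definition rgnat_face_preserving (X Y : rgcat) (e : rgnat X Y) : Prop :=
  forall s, fmor (face Y s) ⊙ eta1 e = eta0 e ⊙ fobj (face X s).

Definition rgnat_degen_preserving (X Y : rgcat) (F G : rgfun X Y) (e : rgnat X Y) : Prop :=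
  icmp (r1 Y) (eta1 e ⊙ fobj (degen X)) (eps F)
  = icmp (r1 Y) (eps G) (fmor (degen Y) ⊙ eta0 e).

Definition lies_in (D E : icat) (I : ifun D E) (J : C) (f : hom J (c1 E)) : Prop :=
  exists k : hom J (c1 D), fmor I ⊙ k = f.

Definition all_iso (D : icat) : Prop :=
  forall J (f : hom J (c1 D)), is_iiso f.

Definition is_rgcat_iso (X M : rgcat) (I : rgfun M X) : Prop :=
  is_rgcat X /\ is_rgcat M /\ is_rgfun I /\
  iso_C (fobj (F0 I)) /\ iso_C (fobj (F1 I)) /\
  monic_C (fmor (F0 I)) /\ monic_C (fmor (F1 I)) /\
  (forall s, ifun_eq (ifun_comp (F0 I) (face M s)) (ifun_comp (face X s) (F1 I))) /\
  ifun_eq (ifun_comp (F1 I) (degen M)) (ifun_comp (degen X) (F0 I)) /\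
  eps I = ida (r1 X) ⊙ fobj (ifun_comp (degen X) (F0 I)) /\
  all_iso (r0 M) /\ all_iso (r1 M).

Definition stable_products (X M : rgcat) (I : rgfun M X)
    (P0 : iprod_data (r0 X)) (P1 : iprod_data (r1 X)) : Prop :=
  is_iprod P0 /\ is_iprod P1 /\
  (* products of morphisms in M(l) lie in M(l) *)
  (forall J (f g h : hom J (c1 (r0 X))),
      lies_in (F0 I) f -> lies_in (F0 I) g -> iprod_mor P0 f g h -> lies_in (F0 I) h) /\
  (forall J (f g h : hom J (c1 (r1 X))),
      lies_in (F1 I) f -> lies_in (F1 I) g -> iprod_mor P1 f g h -> lies_in (F1 I) h) /\
  (* strict preservation by face maps, comparison morphism = identity *)
  (forall s,
     fobj (face X s) ⊙ ipr P1 = ipr P0 ⊙ prodmap (fobj (face X s)) (fobj (face X s)) /\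
     forall J (a b : hom J (c0 (r1 X))) (c : hom J (c1 (r0 X))),
       src (r0 X) ⊙ c = fobj (face X s) ⊙ (ipr P1 ⊙ pair a b) ->
       tgt (r0 X) ⊙ c = ipr P0 ⊙ pair (fobj (face X s) ⊙ a) (fobj (face X s) ⊙ b) ->
       icmp (r0 X) (ifst P0 ⊙ pair (fobj (face X s) ⊙ a) (fobj (face X s) ⊙ b)) c
         = fmor (face X s) ⊙ (ifst P1 ⊙ pair a b) ->
       icmp (r0 X) (isnd P0 ⊙ pair (fobj (face X s) ⊙ a) (fobj (face X s) ⊙ b)) c
         = fmor (face X s) ⊙ (isnd P1 ⊙ pair a b) ->
       c = ida (r0 X) ⊙ (fobj (face X s) ⊙ (ipr P1 ⊙ pair a b))) /\
  (* the degeneracy comparison eta^x[a,b] is an isomorphism lying in M(1) *)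
  (forall J (a b : hom J (c0 (r0 X))) (c : hom J (c1 (r1 X))),
     src (r1 X) ⊙ c = fobj (degen X) ⊙ (ipr P0 ⊙ pair a b) ->
     tgt (r1 X) ⊙ c = ipr P1 ⊙ pair (fobj (degen X) ⊙ a) (fobj (degen X) ⊙ b) ->
     icmp (r1 X) (ifst P1 ⊙ pair (fobj (degen X) ⊙ a) (fobj (degen X) ⊙ b)) c
       = fmor (degen X) ⊙ (ifst P0 ⊙ pair a b) ->
     icmp (r1 X) (isnd P1 ⊙ pair (fobj (degen X) ⊙ a) (fobj (degen X) ⊙ b)) c
       = fmor (degen X) ⊙ (isnd P0 ⊙ pair a b) ->
     is_iiso c /\ lies_in (F1 I) c).

Fixpoint pow_icat (n : nat) (D : icat) : icat :=
  match n with
  | O => {| c0 := one; c1 := one; src := idc one; tgt := idc one; ida := idc one;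
            icmp := fun J _ _ => bang J |}
  | S m => let P := pow_icat m D in
      {| c0 := prod (c0 D) (c0 P); c1 := prod (c1 D) (c1 P);
         src := prodmap (src D) (src P); tgt := prodmap (tgt D) (tgt P);
         ida := prodmap (ida D) (ida P);
         icmp := fun J f g => pair (icmp D (pi1 ⊙ f) (pi1 ⊙ g)) (icmp P (pi2 ⊙ f) (pi2 ⊙ g)) |}
  end.

Fixpoint pow_ifun (n : nat) (D E : icat) (F : ifun D E) : ifun (pow_icat n D) (pow_icat n E) :=
  match n return ifun (pow_icat n D) (pow_icat n E) with
  | O => @Build_ifun (pow_icat 0 D) (pow_icat 0 E) (idc one) (idc one)
  | S m => @Build_ifun (pow_icat (S m) D) (pow_icat (S m) E)
              (prodmap (fobj F) (fobj (pow_ifun m F)))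
              (prodmap (fmor F) (fmor (pow_ifun m F)))
  end.

Definition pow_rgcat (n : nat) (X : rgcat) : rgcat :=
  {| r0 := pow_icat n (r0 X); r1 := pow_icat n (r1 X);
     face := fun s => pow_ifun n (face X s);
     degen := pow_ifun n (degen X) |}.

Section FunCat.
Variables (X M : rgcat) (I : rgfun M X) (n : nat).

Definition MnM_obj (F : rgfun (pow_rgcat n M) M) : Prop :=
  is_rgfun F /\ face_preserving F /\ degen_preserving F.

Definition MnM_hom (F G : rgfun (pow_rgcat n M) M) (e : rgnat (pow_rgcat n M) X) : Prop :=
  is_rgnat (rgfun_comp I F) (rgfun_comp I G) e /\
  rgnat_face_preserving e /\
  rgnat_degen_preserving (rgfun_comp I F) (rgfun_comp I G) e.

Definition MnM_id (F : rgfun (pow_rgcat n M) M) : rgnat (pow_rgcat n M) X :=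
  {| eta0 := ida (r0 X) ⊙ fobj (F0 (rgfun_comp I F));
     eta1 := ida (r1 X) ⊙ fobj (F1 (rgfun_comp I F)) |}.

Definition MnM_comp (e' e : rgnat (pow_rgcat n M) X) : rgnat (pow_rgcat n M) X :=
  {| eta0 := icmp (r0 X) (eta0 e') (eta0 e);
     eta1 := icmp (r1 X) (eta1 e') (eta1 e) |}.

Definition MnM_has_products : Prop :=
  forall A B, MnM_obj A -> MnM_obj B ->
  exists P p1 p2, MnM_obj P /\ MnM_hom P A p1 /\ MnM_hom P B p2 /\
    forall Q q1 q2, MnM_obj Q -> MnM_hom Q A q1 -> MnM_hom Q B q2 ->
      exists h, MnM_hom Q P h /\ MnM_comp p1 h = q1 /\ MnM_comp p2 h = q2 /\
        forall h', MnM_hom Q P h' -> MnM_comp p1 h' = q1 -> MnM_comp p2 h' = q2 -> h' = h.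
End FunCat.

End Internal.

(* The product of A and B is built in X, levelwise: at level l it is the internal
   product functor I A(l) x I B(l) with the projections fst and snd, and its degeneracy
   comparison is (eps_A x eps_B) composed with the canonical comparison
   d(a x b) -> d a x d b.  Faces commute with it strictly because they preserve products
   strictly, and its universal property is checked level by level.  Stability of products
   says that the product morphisms and the comparison lie in M, so the construction lifts
   along I, which is bijective on objects and faithful; the lifted degeneracy comparison is
   invertible because every morphism of M(1) is. *)

From Stdlib Require Import ssreflect.
Set Implicit Arguments.
Unset Strict Implicit.

Section Ambient.
Variable C : Category.

Lemma compA_r (a b c d : C) (h : hom c d) (g : hom b c) (f : hom a b) :
  (h ⊙ g) ⊙ f = h ⊙ (g ⊙ f).
Proof. by rewrite compA. Qed.

Lemma pair_comp (z c a b : C) (f : hom c a) (g : hom c b) (h : hom z c) :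
  pair f g ⊙ h = pair (f ⊙ h) (g ⊙ h).
Proof. by rewrite (pair_uniq (pair f g ⊙ h)) !compA pair_pi1 pair_pi2. Qed.

Lemma precomp_eq (a b c d : C) (x : hom b c) (y : hom a b) (z : hom d c) (w : hom a d) :
  x ⊙ y = z ⊙ w -> forall J (u : hom J a), x ⊙ (y ⊙ u) = z ⊙ (w ⊙ u).
Proof. by move=> E J u; rewrite !compA E. Qed.

Lemma iso_C_monic (a b : C) (f : hom a b) : iso_C f -> monic_C f.
Proof.
move=> [g [gf _]] z u v E.
by rewrite -(comp1l u) -(comp1l v) -gf -!compA E.
Qed.

Lemma hom_one_eq (a : C) (f g : hom a one) : f = g.
Proof. by rewrite (bang_uniq f) (bang_uniq g). Qed.

End Ambient.

Ltac comp_simpl :=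
  repeat rewrite ?compA_r ?pair_comp ?pair_pi1 ?pair_pi2 ?comp1l ?comp1r.

Section InternalCategory.
Variables (C : Category) (D : icat C) (HD : is_icat D).

Lemma src_idaK (J : C) (u : hom J (c0 D)) : src D ⊙ (ida D ⊙ u) = u.
Proof. by case: HD => H _; rewrite compA H comp1l. Qed.

Lemma tgt_idaK (J : C) (u : hom J (c0 D)) : tgt D ⊙ (ida D ⊙ u) = u.
Proof. by case: HD => _ [H _]; rewrite compA H comp1l. Qed.

Lemma src_icmp J (f g : hom J (c1 D)) :
  composable f g -> src D ⊙ icmp f g = src D ⊙ g.
Proof. by case: HD => _ [_ [H _]] fg; case: (H _ _ _ fg). Qed.

Lemma tgt_icmp J (f g : hom J (c1 D)) :
  composable f g -> tgt D ⊙ icmp f g = tgt D ⊙ f.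
Proof. by case: HD => _ [_ [H _]] fg; case: (H _ _ _ fg). Qed.

Lemma icmp_comp J K (h : hom K J) (f g : hom J (c1 D)) :
  composable f g -> icmp f g ⊙ h = icmp (f ⊙ h) (g ⊙ h).
Proof. by case: HD => _ [_ [_ [H _]]]; apply: H. Qed.

Lemma icmp1l J (f : hom J (c1 D)) a : tgt D ⊙ f = a -> icmp (ida D ⊙ a) f = f.
Proof. by case: HD => _ [_ [_ [_ [H _]]]] <-; apply: H. Qed.

Lemma icmp1r J (f : hom J (c1 D)) a : src D ⊙ f = a -> icmp f (ida D ⊙ a) = f.
Proof. by case: HD => _ [_ [_ [_ [_ [H _]]]]] <-; apply: H. Qed.

Lemma icmpA J (f g h : hom J (c1 D)) : composable f g -> composable g h ->
  icmp f (icmp g h) = icmp (icmp f g) h.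
Proof. by case: HD => _ [_ [_ [_ [_ [_ H]]]]]; apply: H. Qed.

Lemma composable_comp J K (h : hom K J) (f g : hom J (c1 D)) :
  composable f g -> composable (f ⊙ h) (g ⊙ h).
Proof. by rewrite /composable => E; rewrite !compA E. Qed.

End InternalCategory.

Lemma ifun_ext (C : Category) (D E : icat C) (F G : ifun D E) :
  fobj F = fobj G -> fmor F = fmor G -> F = G.
Proof. by case: F; case: G => /= ? ? ? ? -> ->. Qed.

Section InternalFunctor.
Variables (C : Category) (D E : icat C) (F : ifun D E) (HF : is_ifun F).

Lemma src_fmor J (u : hom J (c1 D)) : src E ⊙ (fmor F ⊙ u) = fobj F ⊙ (src D ⊙ u).
Proof. by case: HF => H _; rewrite compA H compA_r. Qed.

Lemma tgt_fmor J (u : hom J (c1 D)) : tgt E ⊙ (fmor F ⊙ u) = fobj F ⊙ (tgt D ⊙ u).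
Proof. by case: HF => _ [H _]; rewrite compA H compA_r. Qed.

Lemma fmor_ida J (u : hom J (c0 D)) : fmor F ⊙ (ida D ⊙ u) = ida E ⊙ (fobj F ⊙ u).
Proof. by case: HF => _ [_ [H _]]; rewrite compA H compA_r. Qed.

Lemma fmor_icmp J (f g : hom J (c1 D)) : composable f g ->
  fmor F ⊙ icmp f g = icmp (fmor F ⊙ f) (fmor F ⊙ g).
Proof. by case: HF => _ [_ [_ H]]; apply: H. Qed.

Lemma composable_fmor J (f g : hom J (c1 D)) : composable f g ->
  composable (fmor F ⊙ f) (fmor F ⊙ g).
Proof. by rewrite /composable src_fmor tgt_fmor => ->. Qed.

End InternalFunctor.

Lemma is_ifun_comp (C : Category) (D E F : icat C) (G : ifun E F) (H : ifun D E) :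
  is_ifun G -> is_ifun H -> is_ifun (ifun_comp G H).
Proof.
move=> HG HH; split; [|split; [|split]] => /=.
- by case: HH => Hs _; rewrite src_fmor // Hs compA.
- by case: HH => _ [Ht _]; rewrite tgt_fmor // Ht compA.
- by case: HH => _ [_ [Hi _]]; rewrite compA_r Hi fmor_ida // compA.
- move=> J f g fg.
  by rewrite !compA_r fmor_icmp // fmor_icmp //; apply: composable_fmor.
Qed.

Lemma is_ifun_pow (C : Category) (D E : icat C) (F : ifun D E) :
  is_ifun F -> forall n, is_ifun (pow_ifun n F).
Proof.
move=> HF; elim=> [|m IH].
  by split; [|split; [|split]] => *; apply: hom_one_eq.
split; [|split; [|split]] => /=; rewrite /prodmap; comp_simpl.
- by rewrite src_fmor // src_fmor.
- by rewrite tgt_fmor // tgt_fmor.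
- by rewrite fmor_ida // fmor_ida.
- move=> J f g fg.
  have fg1 : composable (pi1 ⊙ f) (pi1 ⊙ g).
    by move: (f_equal (fun x => pi1 ⊙ x) fg); rewrite /= /prodmap; comp_simpl.
  have fg2 : composable (pi2 ⊙ f) (pi2 ⊙ g).
    by move: (f_equal (fun x => pi2 ⊙ x) fg); rewrite /= /prodmap; comp_simpl.
  by comp_simpl; rewrite fmor_icmp // fmor_icmp.
Qed.

Section NaturalTransformation.
Variables (C : Category) (D E : icat C) (HE : is_icat E).

Lemma is_inat_whiskerl (B : icat C) (H : ifun E B) (G1 G2 : ifun D E) eta :
  is_ifun H -> is_ifun G1 -> is_ifun G2 -> is_inat G1 G2 eta ->
  is_inat (ifun_comp H G1) (ifun_comp H G2) (fmor H ⊙ eta).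
Proof.
move=> HH HG1 HG2 [es [et en]]; split; [|split] => /=.
- by case: HH => Hs _; rewrite compA Hs compA_r es.
- by case: HH => _ [Ht _]; rewrite compA Ht compA_r et.
- move=> J f; rewrite !compA_r -!fmor_icmp ?en //.
  all: by rewrite /composable ?src_fmor ?tgt_fmor // !compA ?es ?et.
Qed.

Lemma is_inat_inverse (F G : ifun D E) eta eta' :
  is_ifun F -> is_ifun G -> is_inat F G eta ->
  src E ⊙ eta' = fobj G -> tgt E ⊙ eta' = fobj F ->
  icmp eta' eta = ida E ⊙ fobj F -> icmp eta eta' = ida E ⊙ fobj G ->
  is_inat G F eta'.
Proof.
move=> HF HG [es [et en]] es' et' e'e ee'; split; [done|split; [done|]] => J f.
have src_eta K (u : hom K _) : src E ⊙ (eta ⊙ u) = fobj F ⊙ u by rewrite compA es.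
have tgt_eta K (u : hom K _) : tgt E ⊙ (eta ⊙ u) = fobj G ⊙ u by rewrite compA et.
have src_eta' K (u : hom K _) : src E ⊙ (eta' ⊙ u) = fobj G ⊙ u by rewrite compA es'.
have tgt_eta' K (u : hom K _) : tgt E ⊙ (eta' ⊙ u) = fobj F ⊙ u by rewrite compA et'.
have e'eK K (u : hom K _) : icmp (eta' ⊙ u) (eta ⊙ u) = ida E ⊙ (fobj F ⊙ u).
  by rewrite -icmp_comp ?e'e ?compA_r // /composable es' et.
have ee'K K (u : hom K _) : icmp (eta ⊙ u) (eta' ⊙ u) = ida E ⊙ (fobj G ⊙ u).
  by rewrite -icmp_comp ?ee' ?compA_r // /composable es et'.
rewrite -[fmor G ⊙ f in LHS](icmp1r HE (src_fmor HG f)) -ee'K.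
rewrite (icmpA HE (f := fmor G ⊙ f));
  [by rewrite /composable src_fmor // tgt_eta | by rewrite /composable src_eta tgt_eta' |].
rewrite -en -(icmpA HE (f := eta ⊙ _));
  [by rewrite /composable src_eta tgt_fmor | by rewrite /composable src_fmor // tgt_eta' |].
have Fe' : composable (fmor F ⊙ f) (eta' ⊙ (src D ⊙ f)).
  by rewrite /composable src_fmor // tgt_eta'.
rewrite (icmpA HE (f := eta' ⊙ _)); [by rewrite /composable src_eta' tgt_eta |
  by rewrite /composable src_eta tgt_icmp // tgt_fmor |].
by rewrite e'eK icmp1l // tgt_icmp // tgt_fmor.
Qed.

End NaturalTransformation.

Section Reflection.
Variables (C : Category) (M X D : icat C) (I : ifun M X) (HI : is_ifun I).
Hypotheses (isoI : iso_C (fobj I)) (monI : monic_C (fmor I)).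

Lemma is_ifun_of_comp (F : ifun D M) : is_ifun (ifun_comp I F) -> is_ifun F.
Proof.
move=> [IFs [IFt [IFida IFcmp]]] /=.
have Fs : src M ⊙ fmor F = fobj F ⊙ src D.
  by apply: (iso_C_monic isoI); rewrite -src_fmor // IFs compA_r.
have Ft : tgt M ⊙ fmor F = fobj F ⊙ tgt D.
  by apply: (iso_C_monic isoI); rewrite -tgt_fmor // IFt compA_r.
split; [done|split; [done|split]].
- by apply: monI; rewrite fmor_ida // -IFida compA_r.
- move=> J f g fg; apply: monI.
  have Ffg : composable (fmor F ⊙ f) (fmor F ⊙ g).
    by move: fg; rewrite /composable !compA Fs Ft !compA_r => ->.
  by rewrite compA IFcmp // !compA_r fmor_icmp.
Qed.

Lemma is_inat_of_whiskerl (F G : ifun D M) eta : is_ifun F -> is_ifun G ->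
  is_inat (ifun_comp I F) (ifun_comp I G) (fmor I ⊙ eta) -> is_inat F G eta.
Proof.
move=> HF HG [es [et en]] /=.
have Hs : src M ⊙ eta = fobj F.
  by apply: (iso_C_monic isoI); rewrite -src_fmor.
have Ht : tgt M ⊙ eta = fobj G.
  by apply: (iso_C_monic isoI); rewrite -tgt_fmor.
split; [done|split; [done|]] => J f; apply: monI.
rewrite !fmor_icmp //; last by move: (en J f); rewrite /= !compA_r.
all: by rewrite /composable ?src_fmor ?tgt_fmor // !compA ?Hs ?Ht.
Qed.

Lemma lies_in_icmp J (x y : hom J (c1 X)) :
  lies_in I x -> lies_in I y -> composable x y -> lies_in I (icmp x y).
Proof.
move=> [kx <-] [ky <-] xy; exists (icmp kx ky).
rewrite fmor_icmp //; apply: (iso_C_monic isoI).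
by move: xy; rewrite /composable -src_fmor // -tgt_fmor.
Qed.

End Reflection.

Section InternalProduct.
Variables (C : Category) (D : icat C) (HD : is_icat D) (P : iprod_data D) (HP : is_iprod P).

Lemma src_ifst J (u : hom J _) : src D ⊙ (ifst P ⊙ u) = ipr P ⊙ u.
Proof. by case: HP => H _; rewrite compA H. Qed.
Lemma tgt_ifst J (u : hom J _) : tgt D ⊙ (ifst P ⊙ u) = pi1 ⊙ u.
Proof. by case: HP => _ [H _]; rewrite compA H. Qed.
Lemma src_isnd J (u : hom J _) : src D ⊙ (isnd P ⊙ u) = ipr P ⊙ u.
Proof. by case: HP => _ [_ [H _]]; rewrite compA H. Qed.
Lemma tgt_isnd J (u : hom J _) : tgt D ⊙ (isnd P ⊙ u) = pi2 ⊙ u.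
Proof. by case: HP => _ [_ [_ [H _]]]; rewrite compA H. Qed.

Definition is_ipair J (a b c : hom J (c0 D)) (f g h : hom J (c1 D)) : Prop :=
  src D ⊙ h = c /\ tgt D ⊙ h = ipr P ⊙ pair a b /\
  icmp (ifst P ⊙ pair a b) h = f /\ icmp (isnd P ⊙ pair a b) h = g.

Lemma ipair_exists J (a b c : hom J (c0 D)) (f g : hom J (c1 D)) :
  src D ⊙ f = c -> tgt D ⊙ f = a -> src D ⊙ g = c -> tgt D ⊙ g = b ->
  exists h, is_ipair a b c f g h.
Proof.
by case: HP => _ [_ [_ [_ U]]] fs ft gs gt; have [h [Hh _]] := U J a b c f g fs ft gs gt; exists h.
Qed.

Lemma iprod_ext J (a b c : hom J (c0 D)) (h h' : hom J (c1 D)) :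
  src D ⊙ h = c -> src D ⊙ h' = c ->
  tgt D ⊙ h = ipr P ⊙ pair a b -> tgt D ⊙ h' = ipr P ⊙ pair a b ->
  icmp (ifst P ⊙ pair a b) h = icmp (ifst P ⊙ pair a b) h' ->
  icmp (isnd P ⊙ pair a b) h = icmp (isnd P ⊙ pair a b) h' -> h = h'.
Proof.
move=> hs h's ht h't e1 e2.
have cmp1 : composable (ifst P ⊙ pair a b) h by rewrite /composable src_ifst ht.
have cmp2 : composable (isnd P ⊙ pair a b) h by rewrite /composable src_isnd ht.
have s1 : src D ⊙ icmp (ifst P ⊙ pair a b) h = c by rewrite src_icmp.
have t1 : tgt D ⊙ icmp (ifst P ⊙ pair a b) h = a by rewrite tgt_icmp // tgt_ifst pair_pi1.
have s2 : src D ⊙ icmp (isnd P ⊙ pair a b) h = c by rewrite src_icmp.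
have t2 : tgt D ⊙ icmp (isnd P ⊙ pair a b) h = b by rewrite tgt_icmp // tgt_isnd pair_pi2.
case: HP => _ [_ [_ [_ U]]]; have [x [_ ux]] := U J a b c _ _ s1 t1 s2 t2.
by rewrite -(ux h) ?(ux h').
Qed.

Lemma ipair_comp J K (u : hom K J) (a b c : hom J (c0 D)) (f g h : hom J (c1 D)) :
  is_ipair a b c f g h -> is_ipair (a ⊙ u) (b ⊙ u) (c ⊙ u) (f ⊙ u) (g ⊙ u) (h ⊙ u).
Proof.
move=> [hs [ht [hf hg]]].
have fh : composable (ifst P ⊙ pair a b) h by rewrite /composable src_ifst ht.
have gh : composable (isnd P ⊙ pair a b) h by rewrite /composable src_isnd ht.
split; [by rewrite compA hs | split; [by rewrite compA ht; comp_simpl |]].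
by split; [rewrite -hf | rewrite -hg]; rewrite (icmp_comp HD) //; comp_simpl.
Qed.

Lemma iprod_mor_unique J (f g h h' : hom J (c1 D)) :
  iprod_mor P f g h -> iprod_mor P f g h' -> h = h'.
Proof.
move=> [hs [ht [h1 h2]]] [h's [h't [h'1 h'2]]].
by apply: (iprod_ext hs h's ht h't); rewrite ?h1 ?h2.
Qed.

Lemma iprod_mor_exists J (f g : hom J (c1 D)) : exists h, iprod_mor P f g h.
Proof.
set sfg := pair (src D ⊙ f) (src D ⊙ g).
have cmp1 : composable f (ifst P ⊙ sfg) by rewrite /composable tgt_ifst pair_pi1.
have cmp2 : composable g (isnd P ⊙ sfg) by rewrite /composable tgt_isnd pair_pi2.
have s1 : src D ⊙ icmp f (ifst P ⊙ sfg) = ipr P ⊙ sfg by rewrite src_icmp // src_ifst.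
have t1 : tgt D ⊙ icmp f (ifst P ⊙ sfg) = tgt D ⊙ f by rewrite tgt_icmp.
have s2 : src D ⊙ icmp g (isnd P ⊙ sfg) = ipr P ⊙ sfg by rewrite src_icmp // src_isnd.
have t2 : tgt D ⊙ icmp g (isnd P ⊙ sfg) = tgt D ⊙ g by rewrite tgt_icmp.
by have [h Hh] := ipair_exists s1 t1 s2 t2; exists h.
Qed.

Lemma iprod_mor_comp J K (u : hom K J) (f g h : hom J (c1 D)) :
  iprod_mor P f g h -> iprod_mor P (f ⊙ u) (g ⊙ u) (h ⊙ u).
Proof.
move=> [hs [ht [h1 h2]]].
have cmp1 : composable (ifst P ⊙ pair (tgt D ⊙ f) (tgt D ⊙ g)) h
  by rewrite /composable src_ifst ht.
have cmp2 : composable (isnd P ⊙ pair (tgt D ⊙ f) (tgt D ⊙ g)) h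
  by rewrite /composable src_isnd ht.
have cmp3 : composable f (ifst P ⊙ pair (src D ⊙ f) (src D ⊙ g))
  by rewrite /composable tgt_ifst pair_pi1.
have cmp4 : composable g (isnd P ⊙ pair (src D ⊙ f) (src D ⊙ g))
  by rewrite /composable tgt_isnd pair_pi2.
move: (f_equal (fun x => x ⊙ u) h1) (f_equal (fun x => x ⊙ u) h2).
rewrite /= !icmp_comp //; comp_simpl => h1u h2u.
by split; [|split]; rewrite ?compA ?hs ?ht; comp_simpl.
Qed.

Lemma iprod_mor_ida J (a b : hom J (c0 D)) :
  iprod_mor P (ida D ⊙ a) (ida D ⊙ b) (ida D ⊙ (ipr P ⊙ pair a b)).
Proof.
rewrite /iprod_mor !src_idaK // !tgt_idaK //.
split; [done|split; [done|split]].
- by rewrite icmp1r ?src_ifst // icmp1l // tgt_ifst; comp_simpl.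
- by rewrite icmp1r ?src_isnd // icmp1l // tgt_isnd; comp_simpl.
Qed.

Lemma iprod_mor_icmp J (f1 f2 g1 g2 h1 h2 : hom J (c1 D)) :
  composable f1 f2 -> composable g1 g2 ->
  iprod_mor P f1 g1 h1 -> iprod_mor P f2 g2 h2 ->
  iprod_mor P (icmp f1 f2) (icmp g1 g2) (icmp h1 h2).
Proof.
move=> f12 g12 [s1 [t1 [F1 G1]]] [s2 [t2 [F2 G2]]].
have h12 : composable h1 h2 by rewrite /composable s1 t2 f12 g12.
split; [|split; [|split]].
- by rewrite !src_icmp.
- by rewrite !tgt_icmp.
- rewrite !tgt_icmp // !src_icmp // icmpA //; first by rewrite /composable src_ifst t1.
  rewrite F1 -icmpA //; [by rewrite /composable tgt_ifst pair_pi1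
    | by rewrite /composable src_ifst t2 f12 g12 |].
  by rewrite f12 g12 F2 icmpA // /composable tgt_ifst pair_pi1.
- rewrite !tgt_icmp // !src_icmp // icmpA //; first by rewrite /composable src_isnd t1.
  rewrite G1 -icmpA //; [by rewrite /composable tgt_isnd pair_pi2
    | by rewrite /composable src_isnd t2 f12 g12 |].
  by rewrite f12 g12 G2 icmpA // /composable tgt_isnd pair_pi2.
Qed.

End InternalProduct.

Section ProductFunctor.
Variables (C : Category) (D E : icat C) (HE : is_icat E) (P : iprod_data E) (HP : is_iprod P).
Variables (FA FB : ifun D E) (HA : is_ifun FA) (HB : is_ifun FB).
Variables (Pm : hom (c1 D) (c1 E)) (HPm : iprod_mor P (fmor FA) (fmor FB) Pm).

Definition iprod_ifun : ifun D E := Build_ifun (ipr P ⊙ pair (fobj FA) (fobj FB)) Pm.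

Lemma iprod_mor_fmor J (f : hom J (c1 D)) :
  iprod_mor P (fmor FA ⊙ f) (fmor FB ⊙ f) (Pm ⊙ f).
Proof. exact: iprod_mor_comp. Qed.

Lemma src_iprod_fmor J (u : hom J _) :
  src E ⊙ (Pm ⊙ u) = ipr P ⊙ pair (fobj FA ⊙ (src D ⊙ u)) (fobj FB ⊙ (src D ⊙ u)).
Proof. by case: (iprod_mor_fmor u) => ->; rewrite !src_fmor. Qed.

Lemma tgt_iprod_fmor J (u : hom J _) :
  tgt E ⊙ (Pm ⊙ u) = ipr P ⊙ pair (fobj FA ⊙ (tgt D ⊙ u)) (fobj FB ⊙ (tgt D ⊙ u)).
Proof. by case: (iprod_mor_fmor u) => _ [->]; rewrite !tgt_fmor. Qed.

Lemma is_ifun_iprod : is_ifun iprod_ifun.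
Proof.
split; [|split; [|split]] => /=.
- case: HPm => -> _; comp_simpl.
  by case: HA => -> _; case: HB => -> _.
- case: HPm => _ [-> _]; comp_simpl.
  by case: HA => _ [-> _]; case: HB => _ [-> _].
- have := iprod_mor_comp HE HP (ida D) HPm.
  case: HA => _ [_ [-> _]]; case: HB => _ [_ [-> _]] => H.
  exact: (iprod_mor_unique HE HP H (iprod_mor_ida HE HP _ _)).
- move=> J f g fg.
  apply: (iprod_mor_unique HE HP (iprod_mor_fmor (icmp f g))).
  rewrite !fmor_icmp //.
  apply: (iprod_mor_icmp HE HP); try exact: iprod_mor_fmor.
  + exact (composable_fmor HA fg).
  + exact (composable_fmor HB fg).
Qed.

Lemma is_inat_ifst : is_inat iprod_ifun FA (ifst P ⊙ pair (fobj FA) (fobj FB)).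
Proof.
split; [by rewrite /= (src_ifst HP) | split; [by rewrite /= (tgt_ifst HP) pair_pi1 |]].
move=> J f /=; case: (iprod_mor_fmor f) => _ [_ [H _]].
by rewrite !tgt_fmor // !src_fmor // in H; comp_simpl.
Qed.

Lemma is_inat_isnd : is_inat iprod_ifun FB (isnd P ⊙ pair (fobj FA) (fobj FB)).
Proof.
split; [by rewrite /= (src_isnd HP) | split; [by rewrite /= (tgt_isnd HP) pair_pi2 |]].
move=> J f /=; case: (iprod_mor_fmor f) => _ [_ [_ H]].
by rewrite !tgt_fmor // !src_fmor // in H; comp_simpl.
Qed.

Lemma is_inat_ipair (FQ : ifun D E) (HQ : is_ifun FQ) q1 q2 h :
  is_inat FQ FA q1 -> is_inat FQ FB q2 ->
  is_ipair P (fobj FA) (fobj FB) (fobj FQ) q1 q2 h -> is_inat FQ iprod_ifun h.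
Proof.
move=> [_ [_ q1n]] [_ [_ q2n]] [hs [ht [h1 h2]]].
split; [done|split; [done|]] => /= J f.
have src_h K (u : hom K _) : src E ⊙ (h ⊙ u) = fobj FQ ⊙ u by rewrite compA hs.
have tgt_h K (u : hom K _) :
    tgt E ⊙ (h ⊙ u) = ipr P ⊙ pair (fobj FA ⊙ u) (fobj FB ⊙ u).
  by rewrite compA ht; comp_simpl.
have h1K K (u : hom K _) :
    icmp (ifst P ⊙ pair (fobj FA ⊙ u) (fobj FB ⊙ u)) (h ⊙ u) = q1 ⊙ u.
  rewrite -h1 (icmp_comp HE); first by rewrite /composable (src_ifst HP) ht.
  by comp_simpl.
have h2K K (u : hom K _) :
    icmp (isnd P ⊙ pair (fobj FA ⊙ u) (fobj FB ⊙ u)) (h ⊙ u) = q2 ⊙ u.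
  rewrite -h2 (icmp_comp HE); first by rewrite /composable (src_isnd HP) ht.
  by comp_simpl.
have Qh : composable (h ⊙ (tgt D ⊙ f)) (fmor FQ ⊙ f) by rewrite /composable src_h tgt_fmor.
have Pmh : composable (Pm ⊙ f) (h ⊙ (src D ⊙ f))
  by rewrite /composable src_iprod_fmor tgt_h.
case: (iprod_mor_fmor f) => _ [_ [Pf1 Pf2]].
rewrite !tgt_fmor // !src_fmor // in Pf1 Pf2; comp_simpl.
apply: (iprod_ext HE HP (a := fobj FA ⊙ (tgt D ⊙ f)) (b := fobj FB ⊙ (tgt D ⊙ f))
          (c := fobj FQ ⊙ (src D ⊙ f))).
- by rewrite src_icmp // src_fmor.
- by rewrite src_icmp // src_h.
- by rewrite tgt_icmp // tgt_h.
- by rewrite tgt_icmp // tgt_iprod_fmor.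
- rewrite (icmpA HE); [by rewrite /composable (src_ifst HP) tgt_h | done |].
  rewrite h1K q1n (icmpA HE);
    [by rewrite /composable (src_ifst HP) tgt_iprod_fmor | done |].
  rewrite Pf1 -(icmpA HE); [by rewrite /composable (tgt_ifst HP) pair_pi1 src_fmor
    | by rewrite /composable (src_ifst HP) tgt_h |].
  by rewrite h1K.
- rewrite (icmpA HE); [by rewrite /composable (src_isnd HP) tgt_h | done |].
  rewrite h2K q2n (icmpA HE);
    [by rewrite /composable (src_isnd HP) tgt_iprod_fmor | done |].
  rewrite Pf2 -(icmpA HE); [by rewrite /composable (tgt_isnd HP) pair_pi2 src_fmor
    | by rewrite /composable (src_isnd HP) tgt_h |].
  by rewrite h2K.
Qed.

End ProductFunctor.

Lemma rgfun_ext (C : Category) (X Y : rgcat C) (F G : rgfun X Y) :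
  F0 F = F0 G -> F1 F = F1 G -> eps F = eps G -> F = G.
Proof. by case: F; case: G => /= ? ? ? ? ? ? -> -> ->. Qed.

Section ReflexiveGraphCategory.
Variables (C : Category) (X : rgcat C) (HX : is_rgcat X).

Lemma rgcat_icat0 : is_icat (r0 X). Proof. by case: HX. Qed.
Lemma rgcat_icat1 : is_icat (r1 X). Proof. by case: HX => _ []. Qed.
Lemma rgcat_face s : is_ifun (face X s). Proof. by case: HX => _ [_ []]. Qed.
Lemma rgcat_degen : is_ifun (degen X). Proof. by case: HX => _ [_ [_ []]]. Qed.

Lemma face_degen_fobjK s J (u : hom J _) : fobj (face X s) ⊙ (fobj (degen X) ⊙ u) = u.
Proof.
by case: HX => _ [_ [_ [_ [_ H]]]]; case: (H s) => /= E _; rewrite compA E comp1l.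
Qed.

Lemma face_degen_fmorK s J (u : hom J _) : fmor (face X s) ⊙ (fmor (degen X) ⊙ u) = u.
Proof.
by case: HX => _ [_ [_ [_ [_ H]]]]; case: (H s) => /= _ E; rewrite compA E comp1l.
Qed.

End ReflexiveGraphCategory.

Section LaxReflexiveGraphFunctor.
Variables (C : Category) (N Y : rgcat C).

Definition face_degen_preserving (F : rgfun N Y) : Prop :=
  is_rgfun F /\ face_preserving F /\ degen_preserving F.

Definition lax_rgfun (F : rgfun N Y) : Prop :=
  is_rgfun F /\ face_preserving F /\
  is_inat (ifun_comp (degen Y) (F0 F)) (ifun_comp (F1 F) (degen N)) (eps F) /\
  (forall s, fmor (face Y s) ⊙ eps F = ida (r0 Y) ⊙ fobj (F0 F)).

Definition rg_hom (F G : rgfun N Y) (e : rgnat N Y) : Prop :=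
  is_rgnat F G e /\ rgnat_face_preserving e /\ rgnat_degen_preserving F G e.

Definition rgnat_comp (e' e : rgnat N Y) : rgnat N Y :=
  {| eta0 := icmp (eta0 e') (eta0 e); eta1 := icmp (eta1 e') (eta1 e) |}.

Definition is_lax_product (A B P : rgfun N Y) (p1 p2 : rgnat N Y) : Prop :=
  lax_rgfun P /\ rg_hom P A p1 /\ rg_hom P B p2 /\
  forall Q q1 q2, lax_rgfun Q -> rg_hom Q A q1 -> rg_hom Q B q2 ->
    exists h, rg_hom Q P h /\ rgnat_comp p1 h = q1 /\ rgnat_comp p2 h = q2 /\
      forall h', rg_hom Q P h' ->
        rgnat_comp p1 h' = q1 -> rgnat_comp p2 h' = q2 -> h' = h.

Variables (F : rgfun N Y) (HF : lax_rgfun F).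

Lemma lax_ifun0 : is_ifun (F0 F). Proof. by case: HF => [[]]. Qed.
Lemma lax_ifun1 : is_ifun (F1 F). Proof. by case: HF => [[]]. Qed.

Lemma lax_face_fobj s : fobj (face Y s) ⊙ fobj (F1 F) = fobj (F0 F) ⊙ fobj (face N s).
Proof. by case: HF => _ [H _]; case: (H s). Qed.

Lemma lax_face_fmor s : fmor (face Y s) ⊙ fmor (F1 F) = fmor (F0 F) ⊙ fmor (face N s).
Proof. by case: HF => _ [H _]; case: (H s). Qed.

Lemma lax_eps_nat :
  is_inat (ifun_comp (degen Y) (F0 F)) (ifun_comp (F1 F) (degen N)) (eps F).
Proof. by case: HF => _ [_ []]. Qed.

Lemma lax_eps_face s : fmor (face Y s) ⊙ eps F = ida (r0 Y) ⊙ fobj (F0 F).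
Proof. by case: HF => _ [_ [_ ->]]. Qed.

Lemma src_eps : src (r1 Y) ⊙ eps F = fobj (degen Y) ⊙ fobj (F0 F).
Proof. by case: lax_eps_nat. Qed.

Lemma tgt_eps : tgt (r1 Y) ⊙ eps F = fobj (F1 F) ⊙ fobj (degen N).
Proof. by case: lax_eps_nat => _ []. Qed.

Lemma src_eps_comp J (u : hom J _) :
  src (r1 Y) ⊙ (eps F ⊙ u) = fobj (degen Y) ⊙ (fobj (F0 F) ⊙ u).
Proof. by rewrite compA src_eps compA_r. Qed.

Lemma tgt_eps_comp J (u : hom J _) :
  tgt (r1 Y) ⊙ (eps F ⊙ u) = fobj (F1 F) ⊙ (fobj (degen N) ⊙ u).
Proof. by rewrite compA tgt_eps compA_r. Qed.

End LaxReflexiveGraphFunctor.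

Section StableProducts.
Variables (C : Category) (Y : rgcat C) (HY : is_rgcat Y).
Variables (P0 : iprod_data (r0 Y)) (P1 : iprod_data (r1 Y)).
Hypotheses (HP0 : is_iprod P0) (HP1 : is_iprod P1).
Hypothesis face_ipr : forall s,
  fobj (face Y s) ⊙ ipr P1 = ipr P0 ⊙ prodmap (fobj (face Y s)) (fobj (face Y s)).
Hypothesis face_comparison_ida : forall s J (a b : hom J (c0 (r1 Y))) (c : hom J (c1 (r0 Y))),
  src (r0 Y) ⊙ c = fobj (face Y s) ⊙ (ipr P1 ⊙ pair a b) ->
  tgt (r0 Y) ⊙ c = ipr P0 ⊙ pair (fobj (face Y s) ⊙ a) (fobj (face Y s) ⊙ b) ->
  icmp (ifst P0 ⊙ pair (fobj (face Y s) ⊙ a) (fobj (face Y s) ⊙ b)) c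
    = fmor (face Y s) ⊙ (ifst P1 ⊙ pair a b) ->
  icmp (isnd P0 ⊙ pair (fobj (face Y s) ⊙ a) (fobj (face Y s) ⊙ b)) c
    = fmor (face Y s) ⊙ (isnd P1 ⊙ pair a b) ->
  c = ida (r0 Y) ⊙ (fobj (face Y s) ⊙ (ipr P1 ⊙ pair a b)).

Let Y0 := rgcat_icat0 HY.
Let Y1 := rgcat_icat1 HY.
Let faceY := rgcat_face HY.
Let degenY := rgcat_degen HY.

Lemma face_ipr_pair s J (a b : hom J _) :
  fobj (face Y s) ⊙ (ipr P1 ⊙ pair a b)
  = ipr P0 ⊙ pair (fobj (face Y s) ⊙ a) (fobj (face Y s) ⊙ b).
Proof. by rewrite compA face_ipr /prodmap; comp_simpl. Qed.

Lemma face_iprod_proj s J (a b : hom J _) :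
  fmor (face Y s) ⊙ (ifst P1 ⊙ pair a b)
    = ifst P0 ⊙ pair (fobj (face Y s) ⊙ a) (fobj (face Y s) ⊙ b) /\
  fmor (face Y s) ⊙ (isnd P1 ⊙ pair a b)
    = isnd P0 ⊙ pair (fobj (face Y s) ⊙ a) (fobj (face Y s) ⊙ b).
Proof.
have s1 : src (r0 Y) ⊙ (fmor (face Y s) ⊙ (ifst P1 ⊙ pair a b))
    = fobj (face Y s) ⊙ (ipr P1 ⊙ pair a b) by rewrite src_fmor // (src_ifst HP1).
have t1 : tgt (r0 Y) ⊙ (fmor (face Y s) ⊙ (ifst P1 ⊙ pair a b)) = fobj (face Y s) ⊙ a
  by rewrite tgt_fmor // (tgt_ifst HP1) pair_pi1.
have s2 : src (r0 Y) ⊙ (fmor (face Y s) ⊙ (isnd P1 ⊙ pair a b))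
    = fobj (face Y s) ⊙ (ipr P1 ⊙ pair a b) by rewrite src_fmor // (src_isnd HP1).
have t2 : tgt (r0 Y) ⊙ (fmor (face Y s) ⊙ (isnd P1 ⊙ pair a b)) = fobj (face Y s) ⊙ b
  by rewrite tgt_fmor // (tgt_isnd HP1) pair_pi2.
have [c [cs [ct [cf cg]]]] := ipair_exists HP0 s1 t1 s2 t2.
have c_ida := face_comparison_ida cs ct cf cg.
rewrite c_ida in cf cg.
rewrite (icmp1r Y0) in cf; first by rewrite (src_ifst HP0) face_ipr_pair.
rewrite (icmp1r Y0) in cg; first by rewrite (src_isnd HP0) face_ipr_pair.
by split.
Qed.

Lemma face_iprod_mor s J (f g h : hom J (c1 (r1 Y))) :
  iprod_mor P1 f g h ->
  iprod_mor P0 (fmor (face Y s) ⊙ f) (fmor (face Y s) ⊙ g) (fmor (face Y s) ⊙ h).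
Proof.
move=> [hs [ht [h1 h2]]].
split; [|split; [|split]].
- by rewrite !src_fmor // hs face_ipr_pair.
- by rewrite !tgt_fmor // ht face_ipr_pair.
- rewrite !tgt_fmor // !src_fmor // -!(proj1 (face_iprod_proj _ _ _)).
  rewrite -fmor_icmp //; first by rewrite /composable (src_ifst HP1) ht.
  by rewrite h1 fmor_icmp // /composable (tgt_ifst HP1) pair_pi1.
- rewrite !tgt_fmor // !src_fmor // -!(proj2 (face_iprod_proj _ _ _)).
  rewrite -fmor_icmp //; first by rewrite /composable (src_isnd HP1) ht.
  by rewrite h2 fmor_icmp // /composable (tgt_isnd HP1) pair_pi2.
Qed.

Definition degen_comparison J (a b : hom J (c0 (r0 Y))) (c : hom J (c1 (r1 Y))) : Prop :=
  is_ipair P1 (fobj (degen Y) ⊙ a) (fobj (degen Y) ⊙ b)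
    (fobj (degen Y) ⊙ (ipr P0 ⊙ pair a b))
    (fmor (degen Y) ⊙ (ifst P0 ⊙ pair a b)) (fmor (degen Y) ⊙ (isnd P0 ⊙ pair a b)) c.

Lemma degen_comparison_exists J (a b : hom J (c0 (r0 Y))) :
  exists c, degen_comparison a b c.
Proof.
refine (ipair_exists HP1 _ _ _ _).
- by rewrite src_fmor // (src_ifst HP0).
- by rewrite tgt_fmor // (tgt_ifst HP0) pair_pi1.
- by rewrite src_fmor // (src_isnd HP0).
- by rewrite tgt_fmor // (tgt_isnd HP0) pair_pi2.
Qed.

Section Product.
Variables (N : rgcat C) (HdN : is_ifun (degen N)).
Variables (A B : rgfun N Y) (HA : lax_rgfun A) (HB : lax_rgfun B).
Variables (Pm0 : hom (c1 (r0 N)) (c1 (r0 Y))) (Pm1 : hom (c1 (r1 N)) (c1 (r1 Y))).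
Variables (eta Em : hom (c0 (r0 N)) (c1 (r1 Y))).
Hypotheses (HPm0 : iprod_mor P0 (fmor (F0 A)) (fmor (F0 B)) Pm0)
  (HPm1 : iprod_mor P1 (fmor (F1 A)) (fmor (F1 B)) Pm1)
  (Heta : degen_comparison (fobj (F0 A)) (fobj (F0 B)) eta)
  (HEm : iprod_mor P1 (eps A) (eps B) Em).

Local Notation a0 := (fobj (F0 A)).
Local Notation b0 := (fobj (F0 B)).
Local Notation a1 := (fobj (F1 A)).
Local Notation b1 := (fobj (F1 B)).
Local Notation dY := (fobj (degen Y)).
Local Notation dN := (fobj (degen N)).

Definition rgprod : rgfun N Y :=
  {| F0 := iprod_ifun P0 (F0 A) (F0 B) Pm0;
     F1 := iprod_ifun P1 (F1 A) (F1 B) Pm1;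
     eps := icmp Em eta |}.

Definition rgfst : rgnat N Y := Build_rgnat (ifst P0 ⊙ pair a0 b0) (ifst P1 ⊙ pair a1 b1).
Definition rgsnd : rgnat N Y := Build_rgnat (isnd P0 ⊙ pair a0 b0) (isnd P1 ⊙ pair a1 b1).

Let tgt_Em K (u : hom K _) :
  tgt (r1 Y) ⊙ (Em ⊙ u) = ipr P1 ⊙ pair (a1 ⊙ (dN ⊙ u)) (b1 ⊙ (dN ⊙ u)).
Proof. by case: HEm => _ [Ht _]; rewrite compA Ht; comp_simpl; rewrite !tgt_eps_comp. Qed.

Let src_eta K (u : hom K _) :
  src (r1 Y) ⊙ (eta ⊙ u) = dY ⊙ (ipr P0 ⊙ pair (a0 ⊙ u) (b0 ⊙ u)).
Proof. by case: Heta => Hs _; rewrite compA Hs; comp_simpl. Qed.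

Let tgt_eta K (u : hom K _) :
  tgt (r1 Y) ⊙ (eta ⊙ u) = ipr P1 ⊙ pair (dY ⊙ (a0 ⊙ u)) (dY ⊙ (b0 ⊙ u)).
Proof. by case: Heta => _ [Ht _]; rewrite compA Ht; comp_simpl. Qed.

Lemma composable_Em_eta : composable Em eta.
Proof.
case: HEm => Ems _; case: Heta => _ [etat _].
by rewrite /composable Ems etat (src_eps HA) (src_eps HB); comp_simpl.
Qed.

Let composable_Em_eta_comp K (u : hom K _) : composable (Em ⊙ u) (eta ⊙ u).
Proof. exact: composable_comp composable_Em_eta. Qed.

Lemma src_eps_rgprod K (u : hom K _) :
  src (r1 Y) ⊙ (eps rgprod ⊙ u) = dY ⊙ (ipr P0 ⊙ pair (a0 ⊙ u) (b0 ⊙ u)).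
Proof.
by rewrite (icmp_comp Y1 _ composable_Em_eta) (src_icmp Y1 (composable_Em_eta_comp u)) src_eta.
Qed.

Lemma tgt_eps_rgprod K (u : hom K _) :
  tgt (r1 Y) ⊙ (eps rgprod ⊙ u) = ipr P1 ⊙ pair (a1 ⊙ (dN ⊙ u)) (b1 ⊙ (dN ⊙ u)).
Proof.
by rewrite (icmp_comp Y1 _ composable_Em_eta) (tgt_icmp Y1 (composable_Em_eta_comp u)) tgt_Em.
Qed.

Lemma eps_rgprod_ifst K (u : hom K _) :
  icmp (ifst P1 ⊙ pair (a1 ⊙ (dN ⊙ u)) (b1 ⊙ (dN ⊙ u))) (eps rgprod ⊙ u)
  = icmp (eps A ⊙ u) (fmor (degen Y) ⊙ (ifst P0 ⊙ pair (a0 ⊙ u) (b0 ⊙ u))).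
Proof.
rewrite /= (icmp_comp Y1 _ composable_Em_eta).
rewrite (icmpA Y1);
  [by rewrite /composable (src_ifst HP1) tgt_Em | exact: composable_Em_eta_comp |].
case: (iprod_mor_comp Y1 HP1 u HEm) => _ [_ [H1 _]].
rewrite (src_eps_comp HA) (src_eps_comp HB) (tgt_eps_comp HA) (tgt_eps_comp HB) in H1; rewrite H1.
rewrite -(icmpA Y1); [by rewrite /composable (src_eps_comp HA) (tgt_ifst HP1) pair_pi1
  | by rewrite /composable (src_ifst HP1) tgt_eta |].
case: Heta => _ [Ht [H _ ]].
move: (f_equal (fun x => x ⊙ u) H).
rewrite /= (icmp_comp Y1); first by rewrite /composable (src_ifst HP1) Ht.
by comp_simpl => ->.
Qed.

Lemma eps_rgprod_isnd K (u : hom K _) :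
  icmp (isnd P1 ⊙ pair (a1 ⊙ (dN ⊙ u)) (b1 ⊙ (dN ⊙ u))) (eps rgprod ⊙ u)
  = icmp (eps B ⊙ u) (fmor (degen Y) ⊙ (isnd P0 ⊙ pair (a0 ⊙ u) (b0 ⊙ u))).
Proof.
rewrite /= (icmp_comp Y1 _ composable_Em_eta).
rewrite (icmpA Y1);
  [by rewrite /composable (src_isnd HP1) tgt_Em | exact: composable_Em_eta_comp |].
case: (iprod_mor_comp Y1 HP1 u HEm) => _ [_ [_ H1]].
rewrite (src_eps_comp HA) (src_eps_comp HB) (tgt_eps_comp HA) (tgt_eps_comp HB) in H1; rewrite H1.
rewrite -(icmpA Y1); [by rewrite /composable (src_eps_comp HB) (tgt_isnd HP1) pair_pi2
  | by rewrite /composable (src_isnd HP1) tgt_eta |].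
case: Heta => _ [Ht [_ H]].
move: (f_equal (fun x => x ⊙ u) H).
rewrite /= (icmp_comp Y1); first by rewrite /composable (src_isnd HP1) Ht.
by comp_simpl => ->.
Qed.

Lemma face_eps_rgprod s :
  fmor (face Y s) ⊙ eps rgprod = ida (r0 Y) ⊙ (ipr P0 ⊙ pair a0 b0).
Proof.
rewrite /= (fmor_icmp (faceY s) composable_Em_eta).
have faceEm : fmor (face Y s) ⊙ Em = ida (r0 Y) ⊙ (ipr P0 ⊙ pair a0 b0).
  have := face_iprod_mor s HEm; rewrite !lax_eps_face // => H.
  exact: (iprod_mor_unique Y0 HP0 H (iprod_mor_ida Y0 HP0 _ _)).
have faceEta : fmor (face Y s) ⊙ eta = ida (r0 Y) ⊙ (ipr P0 ⊙ pair a0 b0).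
{ case: Heta => Hs [Ht [H1 H2]].
  have [proj1_face proj2_face] := face_iprod_proj s (dY ⊙ a0) (dY ⊙ b0).
  rewrite !face_degen_fobjK // in proj1_face proj2_face.
  apply: (iprod_ext Y0 HP0 (a := a0) (b := b0) (c := ipr P0 ⊙ pair a0 b0)).
  - by rewrite src_fmor // Hs face_degen_fobjK.
  - by rewrite src_idaK.
  - by rewrite tgt_fmor // Ht face_ipr_pair !face_degen_fobjK.
  - by rewrite tgt_idaK.
  - rewrite -{1}proj1_face -fmor_icmp //; first by rewrite /composable (src_ifst HP1) Ht.
    by rewrite H1 face_degen_fmorK // (icmp1r Y0) // (src_ifst HP0).
  - rewrite -{1}proj2_face -fmor_icmp //; first by rewrite /composable (src_isnd HP1) Ht.
    by rewrite H2 face_degen_fmorK // (icmp1r Y0) // (src_isnd HP0). }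
by rewrite faceEm faceEta (icmp1l Y0) // tgt_idaK.
Qed.

Let A0 := lax_ifun0 HA.
Let B0 := lax_ifun0 HB.
Let A1 := lax_ifun1 HA.
Let B1 := lax_ifun1 HB.

Ltac solve_composable :=
  rewrite /composable;
  do 4 rewrite ?(src_ifst HP0) ?(tgt_ifst HP0) ?(src_isnd HP0) ?(tgt_isnd HP0)
    ?(src_ifst HP1) ?(tgt_ifst HP1) ?(src_isnd HP1) ?(tgt_isnd HP1)
    ?(src_fmor degenY) ?(tgt_fmor degenY) ?(src_fmor HdN) ?(tgt_fmor HdN)
    ?(src_fmor A0) ?(tgt_fmor A0) ?(src_fmor B0) ?(tgt_fmor B0)
    ?(src_fmor A1) ?(tgt_fmor A1) ?(src_fmor B1) ?(tgt_fmor B1)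
    ?(src_eps_comp HA) ?(tgt_eps_comp HA) ?(src_eps_comp HB) ?(tgt_eps_comp HB)
    ?src_eps_rgprod ?tgt_eps_rgprod
    ?(src_iprod_fmor Y0 HP0 A0 B0 HPm0) ?(tgt_iprod_fmor Y0 HP0 A0 B0 HPm0)
    ?(src_iprod_fmor Y1 HP1 A1 B1 HPm1) ?(tgt_iprod_fmor Y1 HP1 A1 B1 HPm1)
    ?pair_pi1 ?pair_pi2;
  comp_simpl.

Lemma eps_rgprod_nat :
  is_inat (ifun_comp (degen Y) (F0 rgprod)) (ifun_comp (F1 rgprod) (degen N)) (eps rgprod).
Proof.
split; first by rewrite /=; have := src_eps_rgprod (idc _); rewrite !comp1r.
split; first by rewrite /=; have := tgt_eps_rgprod (idc _); rewrite !comp1r => ->; comp_simpl.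
move=> J f /=; comp_simpl.
case: (iprod_mor_comp Y0 HP0 f HPm0) => _ [_ [Pm0_fst Pm0_snd]].
rewrite (tgt_fmor A0) (tgt_fmor B0) (src_fmor A0) (src_fmor B0) in Pm0_fst Pm0_snd.
case: (iprod_mor_comp Y1 HP1 (fmor (degen N) ⊙ f) HPm1) => _ [_ [Pm1_fst Pm1_snd]].
rewrite (tgt_fmor A1) (tgt_fmor B1) (src_fmor A1) (src_fmor B1) (tgt_fmor HdN) (src_fmor HdN)
  in Pm1_fst Pm1_snd.
have natA := proj2 (proj2 (lax_eps_nat HA)) J f.
have natB := proj2 (proj2 (lax_eps_nat HB)) J f.
move: natA natB => /=; comp_simpl => natA natB.
apply: (iprod_ext Y1 HP1 (a := a1 ⊙ (dN ⊙ (tgt _ ⊙ f))) (b := b1 ⊙ (dN ⊙ (tgt _ ⊙ f)))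
   (c := dY ⊙ (ipr P0 ⊙ pair (a0 ⊙ (src _ ⊙ f)) (b0 ⊙ (src _ ⊙ f))))).
- by rewrite src_icmp; solve_composable.
- by rewrite src_icmp; solve_composable.
- by rewrite tgt_icmp; solve_composable.
- by rewrite tgt_icmp; solve_composable.
- rewrite (icmpA Y1); [by solve_composable | by solve_composable |].
  rewrite eps_rgprod_ifst -(icmpA Y1); [by solve_composable | by solve_composable |].
  rewrite -(fmor_icmp degenY); first by solve_composable.
  rewrite Pm0_fst (fmor_icmp degenY); first by solve_composable.
  rewrite (icmpA Y1); [by solve_composable | by solve_composable |].
  rewrite natA [RHS](icmpA Y1); [by solve_composable | by solve_composable |].
  rewrite Pm1_fst -[RHS](icmpA Y1); [by solve_composable | by solve_composable |].
  by rewrite eps_rgprod_ifst (icmpA Y1) //; solve_composable.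
- rewrite (icmpA Y1); [by solve_composable | by solve_composable |].
  rewrite eps_rgprod_isnd -(icmpA Y1); [by solve_composable | by solve_composable |].
  rewrite -(fmor_icmp degenY); first by solve_composable.
  rewrite Pm0_snd (fmor_icmp degenY); first by solve_composable.
  rewrite (icmpA Y1); [by solve_composable | by solve_composable |].
  rewrite natB [RHS](icmpA Y1); [by solve_composable | by solve_composable |].
  rewrite Pm1_snd -[RHS](icmpA Y1); [by solve_composable | by solve_composable |].
  by rewrite eps_rgprod_isnd (icmpA Y1) //; solve_composable.
Qed.

Lemma lax_rgprod : lax_rgfun rgprod.
Proof.
split; [split; [exact: is_ifun_iprod | exact: is_ifun_iprod] |].
split; last by split; [exact: eps_rgprod_nat | exact: face_eps_rgprod].
move=> s; split => /=.
- by rewrite face_ipr_pair (lax_face_fobj HA) (lax_face_fobj HB); comp_simpl.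
- have := face_iprod_mor s HPm1; rewrite (lax_face_fmor HA) (lax_face_fmor HB) => H.
  exact: (iprod_mor_unique Y0 HP0 H (iprod_mor_comp Y0 HP0 _ HPm0)).
Qed.

Lemma rg_hom_rgfst : rg_hom rgprod A rgfst.
Proof.
split; [split; [exact: is_inat_ifst | exact: is_inat_ifst] | split].
- move=> s /=; rewrite (proj1 (face_iprod_proj _ _ _)).
  by rewrite (lax_face_fobj HA) (lax_face_fobj HB); comp_simpl.
- rewrite /rgnat_degen_preserving /=; comp_simpl.
  by have := eps_rgprod_ifst (idc _); rewrite !comp1r.
Qed.

Lemma rg_hom_rgsnd : rg_hom rgprod B rgsnd.
Proof.
split; [split; [exact: is_inat_isnd | exact: is_inat_isnd] | split].
- move=> s /=; rewrite (proj2 (face_iprod_proj _ _ _)).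
  by rewrite (lax_face_fobj HA) (lax_face_fobj HB); comp_simpl.
- rewrite /rgnat_degen_preserving /=; comp_simpl.
  by have := eps_rgprod_isnd (idc _); rewrite !comp1r.
Qed.

Section Pairing.
Variables (Q : rgfun N Y) (HQ : lax_rgfun Q) (q1 q2 : rgnat N Y).
Hypotheses (Hq1 : rg_hom Q A q1) (Hq2 : rg_hom Q B q2).
Variables (h0 : hom (c0 (r0 N)) (c1 (r0 Y))) (h1 : hom (c0 (r1 N)) (c1 (r1 Y))).
Hypotheses (Hh0 : is_ipair P0 a0 b0 (fobj (F0 Q)) (eta0 q1) (eta0 q2) h0)
  (Hh1 : is_ipair P1 a1 b1 (fobj (F1 Q)) (eta1 q1) (eta1 q2) h1).

Definition rgpair : rgnat N Y := Build_rgnat h0 h1.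

Lemma is_rgnat_rgpair : is_rgnat Q rgprod rgpair.
Proof.
case: Hq1 => [[q10 q11] _]; case: Hq2 => [[q20 q21] _].
split; first exact: (is_inat_ipair Y0 HP0 A0 B0 HPm0 (lax_ifun0 HQ) q10 q20 Hh0).
exact: (is_inat_ipair Y1 HP1 A1 B1 HPm1 (lax_ifun1 HQ) q11 q21 Hh1).
Qed.

Lemma rgnat_face_preserving_rgpair : rgnat_face_preserving rgpair.
Proof.
move=> s /=.
case: Hh1 => h1s [h1t [h1f h1g]].
have [proj1_face proj2_face] := face_iprod_proj s a1 b1.
rewrite (lax_face_fobj HA) (lax_face_fobj HB) in proj1_face proj2_face.
have [h0s [h0t [h0f h0g]]] := ipair_comp Y0 HP0 (fobj (face N s)) Hh0.
apply: (iprod_ext Y0 HP0 _ h0s _ h0t).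
- by rewrite src_fmor // h1s (lax_face_fobj HQ).
- by rewrite tgt_fmor // h1t face_ipr_pair (lax_face_fobj HA) (lax_face_fobj HB).
- rewrite h0f -proj1_face -fmor_icmp //; first by rewrite /composable (src_ifst HP1) h1t.
  by rewrite h1f; case: Hq1 => _ [-> _].
- rewrite h0g -proj2_face -fmor_icmp //; first by rewrite /composable (src_isnd HP1) h1t.
  by rewrite h1g; case: Hq2 => _ [-> _].
Qed.

Lemma rgnat_degen_preserving_rgpair : rgnat_degen_preserving Q rgprod rgpair.
Proof.
rewrite /rgnat_degen_preserving /=.
case: Hh0 => h0s [h0t [h0f h0g]].
have [h1s [h1t [h1f h1g]]] := ipair_comp Y1 HP1 dN Hh1.
have epsQ : composable (h1 ⊙ dN) (eps Q) by rewrite /composable h1s (tgt_eps HQ).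
have epsP : composable (eps rgprod) (fmor (degen Y) ⊙ h0)
  by rewrite /composable tgt_fmor // h0t (src_eps lax_rgprod).
have tgt_epsP : tgt (r1 Y) ⊙ eps rgprod = ipr P1 ⊙ pair (a1 ⊙ dN) (b1 ⊙ dN)
  by rewrite (tgt_eps lax_rgprod) /=; comp_simpl.
have [epsP_fst epsP_snd] := conj (eps_rgprod_ifst (idc _)) (eps_rgprod_isnd (idc _)).
rewrite !comp1r in epsP_fst epsP_snd.
apply: (iprod_ext Y1 HP1 (a := a1 ⊙ dN) (b := b1 ⊙ dN) (c := dY ⊙ fobj (F0 Q))).
- by rewrite src_icmp // (src_eps HQ).
- by rewrite src_icmp // src_fmor // h0s.
- by rewrite tgt_icmp.
- by rewrite tgt_icmp.
- rewrite (icmpA Y1); [by rewrite /composable (src_ifst HP1) h1t | done |].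
  rewrite h1f; case: Hq1 => _ [_ ->].
  rewrite (icmpA Y1); [by rewrite /composable (src_ifst HP1) tgt_epsP | done |].
  rewrite epsP_fst -(icmpA Y1);
    [by rewrite /composable (src_eps HA) tgt_fmor // (tgt_ifst HP0) pair_pi1
    | by rewrite /composable src_fmor // (src_ifst HP0) tgt_fmor // h0t |].
  by rewrite -fmor_icmp ?h0f // /composable (src_ifst HP0) h0t.
- rewrite (icmpA Y1); [by rewrite /composable (src_isnd HP1) h1t | done |].
  rewrite h1g; case: Hq2 => _ [_ ->].
  rewrite (icmpA Y1); [by rewrite /composable (src_isnd HP1) tgt_epsP | done |].
  rewrite epsP_snd -(icmpA Y1);
    [by rewrite /composable (src_eps HB) tgt_fmor // (tgt_isnd HP0) pair_pi2
    | by rewrite /composable src_fmor // (src_isnd HP0) tgt_fmor // h0t |].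
  by rewrite -fmor_icmp ?h0g // /composable (src_isnd HP0) h0t.
Qed.

End Pairing.

Lemma rgprod_is_lax_product : is_lax_product A B rgprod rgfst rgsnd.
Proof.
split; first exact: lax_rgprod.
split; first exact: rg_hom_rgfst.
split; first exact: rg_hom_rgsnd.
move=> Q q1 q2 HQ Hq1 Hq2.
have [[[q10s [q10t _]] [q11s [q11t _]]] _] := Hq1.
have [[[q20s [q20t _]] [q21s [q21t _]]] _] := Hq2.
have [h0 Hh0] := ipair_exists HP0 q10s q10t q20s q20t.
have [h1 Hh1] := ipair_exists HP1 q11s q11t q21s q21t.
exists (rgpair h0 h1); split.
  split; first exact: (is_rgnat_rgpair HQ Hq1 Hq2 Hh0 Hh1).
  split; first exact: (rgnat_face_preserving_rgpair HQ Hq1 Hq2 Hh0 Hh1).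
  exact: (rgnat_degen_preserving_rgpair HQ Hq1 Hq2 Hh0 Hh1).
case: Hh0 Hh1 => [h0s [h0t [h0f h0g]]] [h1s [h1t [h1f h1g]]].
split; first by rewrite /rgnat_comp /= h0f h1f; case: (q1).
split; first by rewrite /rgnat_comp /= h0g h1g; case: (q2).
move=> [g0 g1] [[[g0s [g0t _]] [g1s [g1t _]]] _] E1 E2.
move: (f_equal (@eta0 _ _ _) E1) (f_equal (@eta1 _ _ _) E1) => /= E10 E11.
move: (f_equal (@eta0 _ _ _) E2) (f_equal (@eta1 _ _ _) E2) => /= E20 E21.
rewrite /= in g0s g0t g1s g1t.
congr Build_rgnat.
- by apply: (iprod_ext Y0 HP0 g0s h0s g0t h0t); rewrite ?E10 ?E20 ?h0f ?h0g.
- by apply: (iprod_ext Y1 HP1 g1s h1s g1t h1t); rewrite ?E11 ?E21 ?h1f ?h1g.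
Qed.

End Product.

End StableProducts.

Section LiftAlongInclusion.
Variables (C : Category) (X M : rgcat C) (I : rgfun M X) (HI : is_rgcat_iso I).
Variables (N : rgcat C) (HdN : is_ifun (degen N)).

Let HX : is_rgcat X. Proof. by case: HI. Qed.
Let HM : is_rgcat M. Proof. by case: HI => _ []. Qed.
Let I0 : is_ifun (F0 I). Proof. by case: HI => _ [_ [[]]]. Qed.
Let I1 : is_ifun (F1 I). Proof. by case: HI => _ [_ [[]]]. Qed.
Let iso_fobj0 : iso_C (fobj (F0 I)). Proof. by case: HI => _ [_ [_ []]]. Qed.
Let iso_fobj1 : iso_C (fobj (F1 I)). Proof. by case: HI => _ [_ [_ [_ []]]]. Qed.
Let monic_fmor0 : monic_C (fmor (F0 I)). Proof. by case: HI => _ [_ [_ [_ [_ []]]]]. Qed.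
Let monic_fmor1 : monic_C (fmor (F1 I)). Proof. by case: HI => _ [_ [_ [_ [_ [_ []]]]]]. Qed.
Let I_face s : ifun_eq (ifun_comp (F0 I) (face M s)) (ifun_comp (face X s) (F1 I)).
Proof. by case: HI => _ [_ [_ [_ [_ [_ [_ [H _]]]]]]]. Qed.
Let I_degen : ifun_eq (ifun_comp (F1 I) (degen M)) (ifun_comp (degen X) (F0 I)).
Proof. by case: HI => _ [_ [_ [_ [_ [_ [_ [_ []]]]]]]]. Qed.
Let I_eps : eps I = ida (r1 X) ⊙ fobj (ifun_comp (degen X) (F0 I)).
Proof. by case: HI => _ [_ [_ [_ [_ [_ [_ [_ [_ []]]]]]]]]. Qed.
Let M1_iso : all_iso (r1 M).
Proof. by case: HI => _ [_ [_ [_ [_ [_ [_ [_ [_ [_ []]]]]]]]]]. Qed.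

Let I_face_fobj s J (u : hom J _) :
  fobj (F0 I) ⊙ (fobj (face M s) ⊙ u) = fobj (face X s) ⊙ (fobj (F1 I) ⊙ u).
Proof. by case: (I_face s) => /= E _; apply: precomp_eq. Qed.
Let I_face_fmor s J (u : hom J _) :
  fmor (F0 I) ⊙ (fmor (face M s) ⊙ u) = fmor (face X s) ⊙ (fmor (F1 I) ⊙ u).
Proof. by case: (I_face s) => /= _ E; apply: precomp_eq. Qed.
Let I_degen_fobj J (u : hom J _) :
  fobj (F1 I) ⊙ (fobj (degen M) ⊙ u) = fobj (degen X) ⊙ (fobj (F0 I) ⊙ u).
Proof. by case: I_degen => /= E _; apply: precomp_eq. Qed.
Let I_degen_fmor J (u : hom J _) :
  fmor (F1 I) ⊙ (fmor (degen M) ⊙ u) = fmor (degen X) ⊙ (fmor (F0 I) ⊙ u).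
Proof. by case: I_degen => /= _ E; apply: precomp_eq. Qed.

Lemma eps_rgfun_comp (F : rgfun N M) :
  src (r1 M) ⊙ eps F = fobj (degen M) ⊙ fobj (F0 F) ->
  eps (rgfun_comp I F) = fmor (F1 I) ⊙ eps F.
Proof.
move=> Fs; rewrite /= I_eps /=; comp_simpl.
by apply: (icmp1r (rgcat_icat1 HX)); rewrite src_fmor // Fs I_degen_fobj.
Qed.

Let degen_comp_I (F : rgfun N M) :
  ifun_comp (degen X) (F0 (rgfun_comp I F)) = ifun_comp (F1 I) (ifun_comp (degen M) (F0 F)).
Proof. by apply: ifun_ext => /=; rewrite ?I_degen_fobj ?I_degen_fmor. Qed.

Let comp_degen_I (F : rgfun N M) :
  ifun_comp (F1 (rgfun_comp I F)) (degen N) = ifun_comp (F1 I) (ifun_comp (F1 F) (degen N)).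
Proof. by apply: ifun_ext => /=; rewrite compA_r. Qed.

Lemma lax_rgfun_comp (F : rgfun N M) :
  face_degen_preserving F -> lax_rgfun (rgfun_comp I F).
Proof.
move=> [[F0i F1i] [Fface [[Fnat _] Feps_face]]].
have Feps := eps_rgfun_comp (proj1 Fnat).
split; first by split; apply: is_ifun_comp.
split.
{ move=> s; case: (Fface s) => /= Fface_fobj Fface_fmor; split => /=.
  - by rewrite compA_r -I_face_fobj Fface_fobj; comp_simpl.
  - by rewrite compA_r -I_face_fmor Fface_fmor; comp_simpl. }
split; last by move=> s; rewrite Feps -I_face_fmor Feps_face (fmor_ida I0).
rewrite Feps degen_comp_I comp_degen_I.
apply: is_inat_whiskerl => //; apply: is_ifun_comp => //.
exact: (rgcat_degen HM).
Qed.

Lemma lies_in_eps_rgfun_comp (F : rgfun N M) : face_degen_preserving F ->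
  lies_in (F1 I) (eps (rgfun_comp I F)).
Proof. by move=> [_ [_ [[[Fs _] _] _]]]; exists (eps F); rewrite eps_rgfun_comp. Qed.

Lemma face_degen_preserving_of_comp (F : rgfun N M) :
  src (r1 M) ⊙ eps F = fobj (degen M) ⊙ fobj (F0 F) -> lax_rgfun (rgfun_comp I F) ->
  face_degen_preserving F.
Proof.
move=> Fs [[IF0 IF1] [IFface [IFnat IFeps_face]]].
have F0i := is_ifun_of_comp I0 iso_fobj0 monic_fmor0 IF0.
have F1i := is_ifun_of_comp I1 iso_fobj1 monic_fmor1 IF1.
split; first by split.
split.
{ move=> s; case: (IFface s) => /= IFface_fobj IFface_fmor; split => /=.
  - by apply: (iso_C_monic iso_fobj0); rewrite I_face_fobj IFface_fobj compA_r.
  - by apply: monic_fmor0; rewrite I_face_fmor IFface_fmor compA_r. }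
rewrite (eps_rgfun_comp Fs) in IFnat IFeps_face.
have Fnat : is_inat (ifun_comp (degen M) (F0 F)) (ifun_comp (F1 F) (degen N)) (eps F).
{ apply: (is_inat_of_whiskerl I1 iso_fobj1 monic_fmor1).
  - exact: is_ifun_comp (rgcat_degen HM) F0i.
  - exact: is_ifun_comp F1i HdN.
  - by rewrite -degen_comp_I -comp_degen_I. }
split; last by move=> s; apply: monic_fmor0; rewrite I_face_fmor IFeps_face (fmor_ida I0).
split; first exact: Fnat.
have [g [gs [gt [ge eg]]]] := M1_iso (eps F).
case: (Fnat) => /= Fs' [Ft _]; rewrite Fs' in gt ge; rewrite Ft in gs eg.
exists g; split; last by split.
apply: (is_inat_inverse (rgcat_icat1 HM) _ _ Fnat) => //.
- exact: is_ifun_comp (rgcat_degen HM) F0i.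
- exact: is_ifun_comp F1i HdN.
Qed.

Lemma lax_rgfun_lift (F : rgfun N X) : lax_rgfun F ->
  lies_in (F0 I) (fmor (F0 F)) -> lies_in (F1 I) (fmor (F1 F)) -> lies_in (F1 I) (eps F) ->
  exists G : rgfun N M, face_degen_preserving G /\ rgfun_comp I G = F.
Proof.
move=> HF [k0 Hk0] [k1 Hk1] [ke Hke].
have [inv0 [_ Hinv0]] := iso_fobj0.
have [inv1 [_ Hinv1]] := iso_fobj1.
have inv0K J (u : hom J _) : fobj (F0 I) ⊙ (inv0 ⊙ u) = u by rewrite compA Hinv0 comp1l.
have inv1K J (u : hom J _) : fobj (F1 I) ⊙ (inv1 ⊙ u) = u by rewrite compA Hinv1 comp1l.
pose G : rgfun N M := {| F0 := Build_ifun (inv0 ⊙ fobj (F0 F)) k0;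
                         F1 := Build_ifun (inv1 ⊙ fobj (F1 F)) k1; eps := ke |}.
have Gs : src (r1 M) ⊙ eps G = fobj (degen M) ⊙ fobj (F0 G).
  by apply: (iso_C_monic iso_fobj1); rewrite -src_fmor // Hke (src_eps HF) I_degen_fobj inv0K.
have IG : rgfun_comp I G = F.
  by apply: rgfun_ext; [apply: ifun_ext; rewrite /= ?inv0K | apply: ifun_ext; rewrite /= ?inv1K
                       | rewrite eps_rgfun_comp].
exists G; split; last exact: IG.
by apply: face_degen_preserving_of_comp; rewrite ?IG.
Qed.

End LiftAlongInclusion.

Section LiftedProduct.
Variables (C : Category) (X M : rgcat C) (I : rgfun M X).
Variables (P0 : iprod_data (r0 X)) (P1 : iprod_data (r1 X)).
Hypotheses (HI : is_rgcat_iso I) (HS : stable_products I P0 P1).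
Variables (N : rgcat C) (HdN : is_ifun (degen N)).

Lemma lift_lax_product (A B : rgfun N M) :
  face_degen_preserving A -> face_degen_preserving B ->
  exists P p1 p2, face_degen_preserving P /\
    is_lax_product (rgfun_comp I A) (rgfun_comp I B) (rgfun_comp I P) p1 p2.
Proof.
move=> HA HB.
have [HP0 [HP1 [lies_in_prod0 [lies_in_prod1 [Hface Hdegen]]]]] := HS.
have [HX [_ [[_ I1] [_ [iso_fobj1 _]]]]] := HI.
have laxA := lax_rgfun_comp HI HdN HA.
have laxB := lax_rgfun_comp HI HdN HB.
have [Pm0 HPm0] := iprod_mor_exists (rgcat_icat0 HX) HP0
  (fmor (F0 (rgfun_comp I A))) (fmor (F0 (rgfun_comp I B))).
have [Pm1 HPm1] := iprod_mor_exists (rgcat_icat1 HX) HP1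
  (fmor (F1 (rgfun_comp I A))) (fmor (F1 (rgfun_comp I B))).
have [eta Heta] := degen_comparison_exists HX HP0 HP1
  (fobj (F0 (rgfun_comp I A))) (fobj (F0 (rgfun_comp I B))).
have [Em HEm] := iprod_mor_exists (rgcat_icat1 HX) HP1
  (eps (rgfun_comp I A)) (eps (rgfun_comp I B)).
have prodX := rgprod_is_lax_product HX HP0 HP1
  (fun s => proj1 (Hface s)) (fun s => proj2 (Hface s)) HdN laxA laxB HPm0 HPm1 Heta HEm.
have lift0 : lies_in (F0 I) Pm0 by apply: (lies_in_prod0 _ _ _ _ _ _ HPm0); eexists.
have lift1 : lies_in (F1 I) Pm1 by apply: (lies_in_prod1 _ _ _ _ _ _ HPm1); eexists.
have lift_eps : lies_in (F1 I) (icmp Em eta).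
{ apply: (lies_in_icmp I1 iso_fobj1 _ _ (composable_Em_eta laxA laxB Heta HEm)).
  - apply: (lies_in_prod1 _ _ _ _ _ _ HEm).
    + exact (lies_in_eps_rgfun_comp HI HA).
    + exact (lies_in_eps_rgfun_comp HI HB).
  - by case: Heta => Es [Et [E1 E2]]; case: (Hdegen _ _ _ _ Es Et E1 E2). }
have [P [HP IP]] := lax_rgfun_lift HI HdN (proj1 prodX) lift0 lift1 lift_eps.
by exists P, (rgfst P0 P1 (rgfun_comp I A) (rgfun_comp I B)),
  (rgsnd P0 P1 (rgfun_comp I A) (rgfun_comp I B)); rewrite IP.
Qed.

End LiftedProduct.

Theorem lemma46 (C : Category) (X M : rgcat C) (I : rgfun M X)
    (P0 : iprod_data (r0 X)) (P1 : iprod_data (r1 X)) :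
  is_rgcat_iso I -> stable_products I P0 P1 ->
  forall n : nat, MnM_has_products I n.
Proof.
move=> HI HS n A B HA HB.
have [_ [HM _]] := HI.
have HdN : is_ifun (degen (pow_rgcat n M)) := is_ifun_pow (rgcat_degen HM) n.
have [P [p1 [p2 [HP [_ [Hp1 [Hp2 univ]]]]]]] := lift_lax_product HI HS HdN HA HB.
exists P, p1, p2; do 3 (split; first done).
by move=> Q q1 q2 HQ; exact: univ (lax_rgfun_comp HI HdN HQ).
Qed.
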